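(* Let $F=\frac1{16}\begin{pmatrix}1&2&1\\2&4&2\\1&2&1\end{pmatrix}$ (Gaussian blur filter). Then the equation $F*X=B$ with the periodic boundary condition, for unknown $X\in\mathbb{R}^{m\times n}$, has a unique solution for every $B\in\mathbb{R}^{m\times n}$ if and only if $m,n\notin\{2l: l\in\mathbb{N}\}$.
   Context: $\mathbb{N}=\{1,2,3,\dots\}$. For $F=[f_{ij}]\in\mathbb{R}^{3\times3}$ and $X=[x_{ij}]\in\mathbb{R}^{m\times n}$, the convolution $F*X\in\mathbb{R}^{m\times n}$ is defined by $[F*X]_{ij}=\sum_{l_1=1}^3\sum_{l_2=1}^3 f_{l_1l_2}\,x_{i-l_1+2,\,j-l_2+2}$ for $1\le i\le m$, $1\le j\le n$, where the periodic boundary condition sets $x_{0j}=x_{mj}$, $x_{m+1,j}=x_{1j}$, $x_{i0}=x_{in}$, $x_{i,n+1}=x_{i1}$ (for all indices $i\in\{0,\dots,m+1\}$, $j\in\{0,\dots,n+1\}$, so corners are also determined, e.g. $x_{00}=x_{mn}$). *)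

From HB Require Import structures.
From mathcomp Require Import all_boot all_order all_algebra.
From mathcomp Require Import reals.
Set Implicit Arguments. Unset Strict Implicit. Unset Printing Implicit Defensive.
Import Order.TTheory GRing.Theory Num.Theory.
Local Open Scope ring_scope.

Lemma ord_pos (m : nat) (i : 'I_m) : (0 < m)%N.
Proof. by case: i => k hk; apply: leq_ltn_trans hk. Qed.

(* With 0-based indices i : 'I_m and l : 'I_3 (l = l_1 - 1),
   the paper's index i_1 - l_1 + 2 (1-based, i_1 = i+1) is, 0-based,
   i + 1 - l, taken modulo m: the periodic boundary condition. *)
Definition pshift (m : nat) (i : 'I_m) (l : 'I_3) : 'I_m :=
  Ordinal (ltn_pmod (i + m.+1 - l) (ord_pos i)).

Definition pconv (R : pzRingType) (m n : nat) (F : 'M[R]_3) (X : 'M[R]_(m, n))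
  : 'M[R]_(m, n) :=
  \matrix_(i < m, j < n)
    \sum_(l1 < 3) \sum_(l2 < 3) F l1 l2 * X (pshift i l1) (pshift j l2).

Definition gauss_filter (R : fieldType) : 'M[R]_3 :=
  \matrix_(i < 3, j < 3)
    ((nth 0%N [:: 1; 2; 1]%N i * nth 0%N [:: 1; 2; 1]%N j)%N%:R / 16%:R).

From HB Require Import structures.
From mathcomp Require Import all_boot all_order all_algebra.
From mathcomp Require Import reals.
From mathcomp Require Import ring zify.
Set Implicit Arguments. Unset Strict Implicit. Unset Printing Implicit Defensive.
Import Order.TTheory GRing.Theory Num.Theory.
Local Open Scope ring_scope.

(* The Gaussian filter is (1/16) w w^T with w = (1,2,1), so the periodic
   convolution factors into a row and a column 1D convolution by w, and it is
   invertible iff each 1D factor is.  The 1D operator is (S + 1)^2 for the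
   cyclic shift S; since w has symbol 1 - 2 + 1 = 0 at -1, the alternating
   vector (-1)^i lies in its kernel when the period is even, while for an odd
   period a kernel vector y satisfies (S + 1) z = 0 with z = (S + 1) y, i.e.
   z is alternating and periodic of odd period, hence z = 0 and likewise y = 0.
   Injectivity then gives bijectivity by finite dimension. *)

Section Recurrences.

Variables (R : numDomainType) (m : nat).
Hypothesis m_odd : odd m.

Lemma alternating_periodic_eq0 (h : nat -> R) :
  (forall k, h (k + m)%N = h k) -> (forall k, h k.+1 = - h k) -> h =1 (fun=> 0).
Proof.
move=> h_per h_alt.
have hE k : h k = (-1) ^+ k * h 0%N.
  by elim: k => [|k IHk]; rewrite ?mul1r // h_alt IHk exprS mulN1r mulNr.
have h0 : h 0%N = 0.
  have /eqP := h_per 0%N; rewrite add0n hE -signr_odd m_odd expr1 mulN1r.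
  by rewrite eq_sym -addr_eq0 -mulr2n mulrn_eq0 => /eqP.
by move=> k; rewrite hE h0 mulr0.
Qed.

Lemma binomial_recurrence_periodic_eq0 (g : nat -> R) :
  (forall k, g (k + m)%N = g k) ->
  (forall k, g k.+2 + 2 * g k.+1 + g k = 0) -> g =1 (fun=> 0).
Proof.
move=> g_per g_rec.
have sum0 : forall k, g k + g k.+1 = 0.
  apply: alternating_periodic_eq0 => k; first by rewrite g_per -addSn g_per.
  transitivity (- (g k + g k.+1) + (g k.+2 + 2 * g k.+1 + g k)); first ring.
  by rewrite g_rec addr0.
apply: alternating_periodic_eq0 => // k.
by apply/eqP; rewrite -addr_eq0 addrC sum0.
Qed.

End Recurrences.

Lemma val_pshift (m : nat) (i : 'I_m) (l : 'I_3) :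
  val (pshift i l) = ((i + m.+1 - l) %% m)%N.
Proof. by []. Qed.

Section OneDimensionalBlur.

Variable R : numDomainType.

Definition blur_weight (l : 'I_3) : R := (nth 0%N [:: 1; 2; 1]%N l)%:R.

Definition blur1 (m : nat) (y : 'I_m -> R) (i : 'I_m) : R :=
  \sum_(l < 3) blur_weight l * y (pshift i l).

Lemma eq_blur1 (m : nat) (y z : 'I_m -> R) : y =1 z -> blur1 y =1 blur1 z.
Proof. by move=> eq_yz i; apply: eq_bigr => l _; rewrite eq_yz. Qed.

Lemma blur1_0 (m : nat) : blur1 (fun _ : 'I_m => 0 : R) =1 (fun=> 0).
Proof. by move=> i; apply: big1 => l _; rewrite mulr0. Qed.

Lemma blur1_eq0 (m : nat) (y : 'I_m -> R) :
  odd m -> (forall i, blur1 y i = 0) -> y =1 (fun=> 0).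
Proof.
move=> m_odd y0.
have m_gt0 : (0 < m)%N by case: m y y0 m_odd.
pose g k := y (Ordinal (ltn_pmod k m_gt0)).
have gE a b : (a = b %[mod m])%N -> g a = g b.
  by move=> eq_ab; congr y; apply: val_inj.
have yE (i : 'I_m) : y i = g i by congr y; apply: val_inj; rewrite /= modn_small.
suff g0 : g =1 (fun=> 0) by move=> i; rewrite yE g0.
apply: (binomial_recurrence_periodic_eq0 m_odd) => [k|k].
  by apply: gE; rewrite modnDr.
have shiftE (l : 'I_3) :
    y (pshift (Ordinal (ltn_pmod k.+1 m_gt0)) l) = g (k.+2 - l)%N.
  have l_lt3 := ltn_ord l.
  rewrite yE val_pshift; apply: gE; rewrite modn_mod /= -addnBA; last by lia.
  rewrite modnDml (_ : k.+1 + _ = k.+2 - l + m)%N ?modnDr //; lia.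
have := y0 (Ordinal (ltn_pmod k.+1 m_gt0)).
rewrite /blur1 !big_ord_recr big_ord0 /= !shiftE /blur_weight /=.
by rewrite add0r !mul1r !subSS !subn0.
Qed.

Lemma blur1_alternating (m : nat) (i : 'I_m) :
  ~~ odd m -> blur1 (fun j : 'I_m => (-1) ^+ j) i = 0.
Proof.
move=> m_even; have i_lt_m := ltn_ord i.
have signE (l : 'I_3) : (-1) ^+ pshift i l = (-1) ^+ (i.+1 + l) :> R.
  have l_lt3 := ltn_ord l.
  rewrite val_pshift -signr_odd odd_mod ?(negbTE m_even) // -[RHS]signr_odd.
  by rewrite oddB ?addnS /= ?oddD ?(negbTE m_even) ?addbF ?addNb //; lia.
rewrite /blur1 !big_ord_recr big_ord0 !signE /blur_weight /=.
by rewrite !exprD; ring.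
Qed.

End OneDimensionalBlur.

Section BijectiveLinearEndo.

Variables (F : fieldType) (m n : nat) (f : {linear 'M[F]_(m, n) -> 'M[F]_(m, n)}).

Lemma linear_endo_inj_surj : injective f -> forall B, exists X, f X = B.
Proof.
move=> f_inj B.
have f_mx_free : row_free (lin_mx f).
  apply: inj_row_free => v; rewrite mul_rV_lin => /eqP.
  rewrite mxvec_eq0 -(linear0 f) => /eqP/f_inj v0.
  by rewrite -[v]vec_mxK v0 linear0.
exists (vec_mx (mxvec B *m invmx (lin_mx f))).
by rewrite -mx_vec_lin vec_mxK mulmxKV ?mxvecK // -row_free_unit.
Qed.

Lemma unique_preimage_iff_inj : (forall B, exists! X, f X = B) <-> injective f.
Proof.
split=> [uniq_pre X Y fXY | f_inj B].
  by have [Z [_ Z_uniq]] := uniq_pre (f X); rewrite -(Z_uniq X) // (Z_uniq Y).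
have [X fX] := linear_endo_inj_surj f_inj B.
by exists X; split=> // Y; rewrite -fX => /f_inj.
Qed.

End BijectiveLinearEndo.

Lemma pconv_is_linear (R : comPzRingType) (m n : nat) (F : 'M[R]_3) :
  linear (@pconv R m n F).
Proof.
move=> a X Y; apply/matrixP => i j; rewrite !mxE mulr_sumr -big_split.
apply: eq_bigr => l1 _; rewrite mulr_sumr -big_split; apply: eq_bigr => l2 _.
by rewrite !mxE /=; ring.
Qed.

HB.instance Definition _ (R : comPzRingType) (m n : nat) (F : 'M[R]_3) :=
  GRing.isLinear.Build R 'M[R]_(m, n) 'M[R]_(m, n) *:%R (pconv F)
    (pconv_is_linear F).

Section GaussianBlur.

Variables (R : numFieldType) (m n : nat).

Lemma pconv_gaussE (X : 'M[R]_(m, n)) i j :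
  pconv (gauss_filter R) X i j = 16%:R^-1 * blur1 (fun k => blur1 (X k) j) i.
Proof.
rewrite mxE /blur1 mulr_sumr; apply: eq_bigr => l1 _.
rewrite !mulr_sumr; apply: eq_bigr => l2 _.
by rewrite mxE natrM /blur_weight; ring.
Qed.

Lemma blur1_comm (X : 'M[R]_(m, n)) i j :
  blur1 (fun k => blur1 (X k) j) i = blur1 (fun l => blur1 (X^~ l) i) j.
Proof.
rewrite /blur1; under eq_bigr do rewrite mulr_sumr.
rewrite exchange_big; apply: eq_bigr => l2 _; rewrite mulr_sumr.
by apply: eq_bigr => l1 _; rewrite mulrCA.
Qed.

Lemma pconv_gauss_eq0 (X : 'M[R]_(m, n)) :
  odd m -> odd n -> pconv (gauss_filter R) X = 0 -> X = 0.
Proof.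
move=> m_odd n_odd /matrixP X0.
have rows0 j : (fun k => blur1 (X k) j) =1 (fun=> 0).
  apply: blur1_eq0 => // i; have /eqP := X0 i j.
  by rewrite pconv_gaussE mxE mulf_eq0 invr_eq0 pnatr_eq0 => /eqP.
apply/matrixP => i j; rewrite mxE.
by apply: blur1_eq0 (X i) n_odd _ j => l; apply: rows0.
Qed.

Lemma pconv_gauss_sign_rows :
  ~~ odd m -> pconv (gauss_filter R) (\matrix_(i < m, j < n) (-1) ^+ i) = 0.
Proof.
move=> m_even; apply/matrixP => i j; rewrite pconv_gaussE blur1_comm mxE.
rewrite (eq_blur1 (z := fun=> 0)) ?blur1_0 ?mulr0 // => l.
by rewrite (eq_blur1 (z := fun k => (-1) ^+ k)) ?blur1_alternating // => k; rewrite mxE.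
Qed.

Lemma pconv_gauss_sign_cols :
  ~~ odd n -> pconv (gauss_filter R) (\matrix_(i < m, j < n) (-1) ^+ j) = 0.
Proof.
move=> n_even; apply/matrixP => i j; rewrite pconv_gaussE mxE.
rewrite (eq_blur1 (z := fun=> 0)) ?blur1_0 ?mulr0 // => k.
by rewrite (eq_blur1 (z := fun l => (-1) ^+ l)) ?blur1_alternating // => l; rewrite mxE.
Qed.

End GaussianBlur.

Lemma pos_double_iff_even (m : nat) :
  (0 < m)%N -> (exists l, (0 < l)%N /\ m = (2 * l)%N) <-> ~~ odd m.
Proof.
move=> m_gt0; split=> [[l [_ ->]]|m_even]; first by rewrite oddM.
by exists m./2; have := even_halfK m_even; lia.
Qed.

Theorem corollary5 (R : realType) (m n : nat) (hm : (0 < m)%N) (hn : (0 < n)%N) :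
  (forall B : 'M[R]_(m, n), exists! X : 'M[R]_(m, n),
      pconv (gauss_filter R) X = B)
  <-> (~ (exists l : nat, (0 < l)%N /\ m = (2 * l)%N) /\
       ~ (exists l : nat, (0 < l)%N /\ n = (2 * l)%N)).
Proof.
rewrite !pos_double_iff_even //.
split=> [/unique_preimage_iff_inj pconv_inj | [/negP m_odd /negP n_odd]].
  have kernel0 (X : 'M[R]_(m, n)) : pconv (gauss_filter R) X = 0 -> X = 0.
    by move=> X0; apply: pconv_inj; rewrite linear0.
  have corner1_neq0 (X : 'M[R]_(m, n)) :
      X (Ordinal hm) (Ordinal hn) = 1 -> X != 0.
    move=> X1; apply/eqP => X0.
    by move: X1; rewrite X0 mxE => /eqP; rewrite eq_sym oner_eq0.
  split=> [m_even | n_even].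
  - have /corner1_neq0/eqP[] :
        (\matrix_(i < m, j < n) (-1) ^+ i) (Ordinal hm) (Ordinal hn) = 1 :> R.
      by rewrite mxE.
    exact/kernel0/pconv_gauss_sign_rows.
  - have /corner1_neq0/eqP[] :
        (\matrix_(i < m, j < n) (-1) ^+ j) (Ordinal hm) (Ordinal hn) = 1 :> R.
      by rewrite mxE.
    exact/kernel0/pconv_gauss_sign_cols.
apply/unique_preimage_iff_inj/raddf_inj => X.
by apply: pconv_gauss_eq0; apply/negPn.
Qed.
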